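(* Let $\mathcal{X}=\{0,1\}^{\mathbb{N}}$ with the product topology. For $\eta=(\eta_1,\eta_2,\ldots)\in\mathcal{X}$ let $a_n(\eta)=\#\{1\le i\le n:\eta_i=1\}$, let $\mathcal{Y}\subset\mathcal{X}$ be the set of $\eta$ for which $q(\eta)=\lim_{n\to\infty}a_n(\eta)/n$ exists, and let $\mathcal{Z}_{1/2}=\{\eta\in\mathcal{Y}: q(\eta)=1/2\}$. Fix $\rho>1$. For a subset $\mathcal{Z}\subset\mathcal{Y}$ and continuous functions $x,y:\mathcal{Z}\to[0,\infty)$ define the function $x\oplus y$ on $\mathcal{Z}$ pointwise by $$(x\oplus y)(\eta)=\sup_{p\in[0,1]\cap\mathbb{Q}}\rho^{-\mathrm{KL}(p;q(\eta))}x(\eta)^py(\eta)^{1-p}.$$ Then $x\oplus y=y\oplus x$ for all continuous $x,y:\mathcal{Z}\to[0,\infty)$ if and only if $\mathcal{Z}\subset\mathcal{Z}_{1/2}$.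
   Context: $\mathrm{KL}(p;q)=p\log\frac{p}{q}+(1-p)\log\frac{1-p}{1-q}$ for $p,q\in[0,1]$, with the conventions $0\log(0/a)=0$ for all $a\ge0$, $a\log(a/0)=+\infty$ for $a>0$, $\rho^{-\infty}=0$, and $0^0=1$. *)

From HB Require Import structures.
From mathcomp Require Import all_boot all_order all_algebra.
From mathcomp Require Import all_classical all_reals all_analysis.
Set Implicit Arguments. Unset Strict Implicit. Unset Printing Implicit Defensive.
Import Order.TTheory GRing.Theory Num.Theory.
Import numFieldTopology.Exports.
Local Open Scope classical_set_scope.
Local Open Scope ring_scope.

(* X = {0,1}^N with the product topology; eta i (i = 0,1,2,...) is the
   paper's eta_(i+1). *)
Definition cantor := {ptws nat -> bool}.

Definition a_n (n : nat) (eta : cantor) : nat := \sum_(i < n) nat_of_bool (eta i).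

Section Defs.
Variable R : realType.

Definition freq (eta : cantor) : R^nat := fun n => (a_n n eta)%:R / n%:R.

Definition Yset : set cantor := [set eta | cvgn (freq eta)].

Definition qfreq (eta : cantor) : R := limn (freq eta).

Definition Zhalf : set cantor := [set eta | Yset eta /\ qfreq eta = 2^-1].

Definition xlogxy (a b : R) : \bar R :=
  if a == 0 then 0%E else if b == 0 then +oo%E else (a * ln (a / b))%:E.

Definition KL (p q : R) : \bar R := (xlogxy p q + xlogxy (1 - p) (1 - q))%E.

(* rho^(-e) with rho^(-oo) = 0; the -oo case never arises for p,q in [0,1]. *)
Definition rho_pow_neg (rho : R) (e : \bar R) : R :=
  match e with
  | EFin r => rho `^ (- r)
  | _ => 0
  end.

(* (x (+) y)(eta) = sup_{p in [0,1] cap Q} rho^(-KL(p;q(eta))) x^p y^(1-p),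
   with powR satisfying 0^0 = 1. *)
Definition oplus (rho : R) (x y : cantor -> R) (eta : cantor) : R :=
  sup [set z | exists p : rat, (0 <= p <= 1) /\
        z = rho_pow_neg rho (KL (ratr p) (qfreq eta))
            * x eta `^ (ratr p) * y eta `^ (1 - ratr p)].
End Defs.

From HB Require Import structures.
From mathcomp Require Import all_boot all_order all_algebra.
From mathcomp Require Import all_classical all_reals all_analysis.
From mathcomp Require Import lra.
Import Order.TTheory GRing.Theory Num.Theory.
Import numFieldTopology.Exports.
Set Implicit Arguments. Unset Strict Implicit. Unset Printing Implicit Defensive.
Local Open Scope classical_set_scope.
Local Open Scope ring_scope.

(* If q(eta) = 1/2, the reflection p |-> 1 - p of the rationals in [0,1]
   swaps the roles of x and y in the supremum defining x (+) y, because
   KL(1 - p; 1 - q) = KL(p; q).  Conversely, testing with the constants 0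
   and 1 only the exponent p = 0 (resp. p = 1) survives, so that
   (0 (+) 1)(eta) = (1 - q)^(ln rho) and (1 (+) 0)(eta) = q^(ln rho);
   these agree only when q = 1/2. *)

Lemma a_n_leq n eta : (a_n n eta <= n)%N.
Proof.
rewrite /a_n -[leqRHS]card_ord -sum1_card; apply: leq_sum => i _.
exact: leq_b1.
Qed.

Section Frequencies.
Variable R : realType.

Lemma freq_itv01 eta n : 0 <= freq R eta n <= 1.
Proof.
rewrite /freq; case: n => [|n]; first by rewrite invr0 mulr0 lexx ler01.
by rewrite divr_ge0 //= ler_pdivrMr ?ltr0Sn // mul1r ler_nat a_n_leq.
Qed.

Lemma qfreq_itv01 eta : Yset R eta -> 0 <= qfreq R eta <= 1.
Proof.
move=> cvg_freq; apply/andP; split.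
- by apply: limr_ge => //; apply: nearW => n; case/andP: (freq_itv01 eta n).
- by apply: limr_le => //; apply: nearW => n; case/andP: (freq_itv01 eta n).
Qed.

End Frequencies.

Section Divergence.
Variable R : realType.
Implicit Types p q rho : R.

Lemma KL_compl p q : KL (1 - p) (1 - q) = KL p q.
Proof. by rewrite /KL !subKr addeC. Qed.

Lemma KL0l q : q < 1 -> KL 0 q = (- ln (1 - q))%:E.
Proof.
move=> q_lt1; have compl_gt0 : 0 < 1 - q by rewrite subr_gt0.
by rewrite /KL /xlogxy eqxx subr0 oner_eq0 gt_eqF // mul1r div1r lnV ?posrE // add0e.
Qed.

Lemma KL01 : KL 0 1 = +oo%E :> \bar R.
Proof. by rewrite /KL /xlogxy eqxx subr0 oner_eq0 subrr eqxx add0e. Qed.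

Lemma rho_pow_neg_ge0 rho e : 0 <= rho_pow_neg rho e.
Proof. by case: e => //= r; exact: powR_ge0. Qed.

Lemma powR_lnC (a b : R) : 0 < a -> 0 < b -> a `^ ln b = b `^ ln a.
Proof. by move=> a_gt0 b_gt0; rewrite /powR !gt_eqF // mulrC. Qed.

Hypotheses (rho : R) (rho_gt0 : 0 < rho) (rho_neq1 : rho != 1).

Lemma rho_pow_neg_KL0l q : 0 <= q <= 1 ->
  rho_pow_neg rho (KL 0 q) = (1 - q) `^ ln rho.
Proof.
case/andP=> _; rewrite le_eqVlt => /predU1P[->|q_lt1].
  by rewrite KL01 subrr powR0 // ln_eq0 // ?posrE.
by rewrite KL0l //= opprK powR_lnC // subr_gt0.
Qed.

Lemma rho_pow_neg_KL1l q : 0 <= q <= 1 ->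
  rho_pow_neg rho (KL 1 q) = q `^ ln rho.
Proof.
move=> /andP[q_ge0 q_le1]; rewrite -KL_compl subrr rho_pow_neg_KL0l.
- by rewrite subKr.
- by apply/andP; split; lra.
Qed.

End Divergence.

Lemma rho_pow_neg_KL0l_KL1l_eq (R : realType) (rho q : R) : 1 < rho ->
  0 <= q <= 1 -> rho_pow_neg rho (KL 0 q) = rho_pow_neg rho (KL 1 q) ->
  q = 2^-1.
Proof.
move=> rho_gt1 q01; have rho_gt0 := lt_trans ltr01 rho_gt1.
rewrite rho_pow_neg_KL0l ?rho_pow_neg_KL1l ?gt_eqF //.
have /andP[q_ge0 q_le1] := q01.
move/powR_injective; rewrite ln_gt0 // => /(_ isT).
by rewrite !nnegrE subr_ge0 => /(_ q_le1 q_ge0); lra.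
Qed.

Lemma sup_within_pair0 (R : realType) (S : set R) v :
  S v -> S `<=` [set v; 0] -> 0 <= v -> sup S = v.
Proof.
move=> Sv S_sub v_ge0; apply/eqP; rewrite eq_le; apply/andP; split.
- by apply: ge_sup; [exists v | move=> z /S_sub [->|->]].
- by apply: ub_le_sup => //; exists v => z /S_sub [->|->].
Qed.

Section Oplus.
Variables (R : realType) (rho : R).

Lemma oplus0l (y : cantor -> R) eta : 0 <= y eta ->
  oplus rho (fun=> 0) y eta = rho_pow_neg rho (KL 0 (qfreq R eta)) * y eta.
Proof.
move=> y_ge0; apply: sup_within_pair0.
- by exists 0%Q; split=> //; rewrite rmorph0 powRr0 subr0 powRr1 // mulr1.
- move=> _ [p [_ ->]]; have [->|p_neq0] := eqVneq (ratr p) (0 : R).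
  + by left; rewrite powRr0 subr0 powRr1 // mulr1.
  + by right; rewrite powR0 // mulr0 mul0r.
- by rewrite mulr_ge0 ?rho_pow_neg_ge0.
Qed.

Lemma oplus0r (x : cantor -> R) eta : 0 <= x eta ->
  oplus rho x (fun=> 0) eta = rho_pow_neg rho (KL 1 (qfreq R eta)) * x eta.
Proof.
move=> x_ge0; apply: sup_within_pair0.
- by exists 1%Q; split=> //; rewrite rmorph1 subrr powRr0 powRr1 // mulr1.
- move=> _ [p [_ ->]]; have [p_eq1|p_neq1] := eqVneq (1 - ratr p) (0 : R).
  + left; move/eqP: p_eq1; rewrite subr_eq0 => /eqP <-.
    by rewrite subrr powRr0 powRr1 // mulr1.
  + by right; rewrite (powR0 p_neq1) mulr0.
- by rewrite mulr_ge0 ?rho_pow_neg_ge0.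
Qed.

Lemma oplus_summand_reflect_half (a b r : R) :
  rho_pow_neg rho (KL r 2^-1) * a `^ r * b `^ (1 - r) =
  rho_pow_neg rho (KL (1 - r) 2^-1) * b `^ (1 - r) * a `^ (1 - (1 - r)).
Proof.
have half_compl : 1 - 2^-1 = 2^-1 :> R by lra.
by rewrite -[in KL (1 - r) _]half_compl KL_compl subKr mulrAC.
Qed.

Lemma oplusC_qfreq_half (x y : cantor -> R) eta : qfreq R eta = 2^-1 ->
  oplus rho x y eta = oplus rho y x eta.
Proof.
move=> q_half; rewrite /oplus q_half; congr sup.
apply/seteqP; split=> _ [p [/andP[p_ge0 p_le1] ->]]; exists (1 - p).
all: rewrite rmorphB rmorph1 oplus_summand_reflect_half.
all: by split=> //; apply/andP; split; lra.
Qed.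

End Oplus.

Theorem proposition8p5 (R : realType) (rho : R) (hrho : 1 < rho)
    (Z : set cantor) (hZ : Z `<=` Yset R) :
  (forall x y : cantor -> R,
      {within Z, continuous x} -> {within Z, continuous y} ->
      (forall eta, Z eta -> 0 <= x eta) -> (forall eta, Z eta -> 0 <= y eta) ->
      forall eta, Z eta -> oplus rho x y eta = oplus rho y x eta)
  <-> Z `<=` Zhalf R.
Proof.
split=> [oplusC eta Zeta | Z_half x y _ _ _ _ eta /Z_half[_]].
- have Yeta := hZ _ Zeta; split=> //.
  apply: (rho_pow_neg_KL0l_KL1l_eq hrho (qfreq_itv01 Yeta)).
  have cst_cont (c : R) : {within Z, continuous (fun _ : cantor => c)}.
    exact: continuous_subspaceT (@cst_continuous _ _ _).
  have := oplusC (fun=> 0) (fun=> 1) (cst_cont 0) (cst_cont 1)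
    (fun _ _ => lexx 0) (fun _ _ => ler01) eta Zeta.
  by rewrite oplus0l ?ler01 // oplus0r ?ler01 // !mulr1.
- exact: oplusC_qfreq_half.
Qed.
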